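(* For all integers $n>1$ and $m\geq1$, $\operatorname{ecc}_{Z_{n,m}}(0)\geq\lfloor\frac{n(m+1)}{2}\rfloor$.
   Context: Elements of $\mathbb{Z}_n$ are identified with representatives in $\{0,\dots,n-1\}$. The dYoke graph $Z_{n,m}$ has vertices $u=(u_0,\dots,u_{m+1})\in\mathbb{Z}_n\times\{-1,0,1\}^m\times\mathbb{Z}_n$ with $\sum u_i\equiv0\pmod n$; $u,v$ adjacent if there is $0\leq i\leq m$ with $u_j=v_j$ for $j\notin\{i,i+1\}$ and either ($u_i=v_i+1$, $u_{i+1}=v_{i+1}-1$) or ($u_i=v_i-1$, $u_{i+1}=v_{i+1}+1$), arithmetic in coordinates $0,m+1$ in $\mathbb{Z}_n$. $\operatorname{ecc}_{Z_{n,m}}(0)$ is the maximum distance from the all-zero vertex $0$ to any vertex. *)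

From mathcomp Require Import all_boot all_order all_algebra.
Unset Printing Implicit Defensive.
Import Order.TTheory GRing.Theory Num.Theory.
Local Open Scope ring_scope.

(* A vertex of Z_{n,m} is encoded as an integer vector u : 'I_(m+2) -> int.
   Coordinates 0 and m+1 live in Z_n, represented by {0,...,n-1};
   coordinates 1..m lie in {-1,0,1}; the sum is divisible by n. *)
Definition is_end (m : nat) (j : nat) : bool := (j == 0%N) || (j == m.+1).

Definition dyoke_vertex (n m : nat) (u : {ffun 'I_(m.+2) -> int}) : bool :=
  [forall j : 'I_(m.+2),
     if is_end m j then (0 <= u j) && (u j < n%:Z) else (-1 <= u j) && (u j <= 1)]
  && (n%:Z %| \sum_(j < m.+2) u j)%Z.

Definition coord_eq (n m : nat) (j : nat) (a b : int) : bool :=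
  if is_end m j then (a == b %[mod n%:Z])%Z else a == b.

Definition dyoke_adj (n m : nat) : rel {ffun 'I_(m.+2) -> int} :=
  fun u v =>
    [&& dyoke_vertex n m u, dyoke_vertex n m v &
     [exists i : 'I_(m.+1),
        [forall j : 'I_(m.+2), ((val j != val i) && (val j != (val i).+1)) ==> (u j == v j)]
        && ((coord_eq n m i (u (inord i)) (v (inord i) + 1)
             && coord_eq n m i.+1 (u (inord i.+1)) (v (inord i.+1) - 1))
         || (coord_eq n m i (u (inord i)) (v (inord i) - 1)
             && coord_eq n m i.+1 (u (inord i.+1)) (v (inord i.+1) + 1)))]].

Definition dyoke_zero (m : nat) : {ffun 'I_(m.+2) -> int} := [ffun => 0].

Definition walk (T : Type) (e : rel T) (x y : T) (l : nat) : Prop :=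
  exists p : seq T, size p = l /\ path e x p /\ last x p = y.

(* dist_e(x,y) >= k  (unreachable vertices have infinite distance) *)
Definition dist_ge (T : Type) (e : rel T) (x y : T) (k : nat) : Prop :=
  forall l, walk T e x y l -> (k <= l)%N.

Definition ecc_ge (T : Type) (V : pred T) (e : rel T) (x : T) (k : nat) : Prop :=
  exists2 y, V y & dist_ge T e x y k.

From mathcomp Require Import all_boot all_order all_algebra.
From mathcomp Require Import zify.
Import Order.TTheory GRing.Theory Num.Theory.

(* Record a vertex v by its prefix sums P_t(v) = v_0 + ... + v_t, t = 0..m, with v_0 read
   in {0, ..., n-1}. Along an edge only the coordinates i, i+1 change, by -/+ 1 modulo the
   wrap-around of the end coordinates, so the profile (P_0, ..., P_m) changes by a multiple
   of n added to every entry, plus at most 1 in the single entry P_i. Hence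
   min_k sum_t |k n - P_t(v)| grows by at most one per edge, and it vanishes at 0. At the
   vertex whose prefix sums alternate floor(n/2), ceil(n/2), ..., two consecutive terms
   |k n - P_t| + |k n - P_(t+1)| add up to at least n and each term is at least floor(n/2),
   so the sum is at least floor(n(m+1)/2). *)

Local Open Scope ring_scope.

Section PrefixSums.

Variable m : nat.
Implicit Types (u v : {ffun 'I_m.+2 -> int}) (s : nat -> int).

(* Only meaningful for t <= m.+1: beyond that, inord wraps around to ord0. *)
Definition psum v (t : nat) : int := \sum_(j < t.+1) v (inord j).

Definition of_psum s : {ffun 'I_m.+2 -> int} :=
  [ffun j : 'I_m.+2 => s j - (if nat_of_ord j is j'.+1 then s j' else 0)].

Lemma psum_of_psum s t : (t < m.+2)%N -> psum (of_psum s) t = s t.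
Proof.
elim: t => [|t IHt] t_lt; rewrite /psum.
  by rewrite big_ord1 ffunE inordK // subr0.
by rewrite big_ord_recr -/(psum _ t) IHt 1?ltnW // ffunE inordK //= addrC subrK.
Qed.

Lemma sum_psum v : \sum_(j < m.+2) v j = psum v m.+1.
Proof. by apply: eq_bigr => j _; rewrite inord_val. Qed.

Lemma psum0 t : psum [ffun => 0] t = 0.
Proof. by rewrite /psum big1 // => j _; rewrite ffunE. Qed.

End PrefixSums.

Arguments psum {m} v t.

Lemma sum_supported2 (f : nat -> int) (i t : nat) :
  (forall j, (j <= t)%N -> j != i -> j != i.+1 -> f j = 0) ->
  \sum_(j < t.+1) f j = (if (i <= t)%N then f i else 0) + (if (i < t)%N then f i.+1 else 0).
Proof.
elim: t => [|t IHt] f_supp.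
  rewrite big_ord1; case: i f_supp => [|i] f_supp; first by rewrite addr0.
  by rewrite f_supp ?addr0.
rewrite big_ord_recr /= IHt => [|j j_le]; last by apply: f_supp; lia.
case: (ltngtP i t) => [i_lt | i_gt | ->].
- by rewrite (f_supp t.+1) ?addr0 ?ifT //; lia.
- case: (eqVneq i t.+1) => [-> | i_ne]; first by rewrite leqnn ltnn !add0r addr0.
  by rewrite (f_supp t.+1) ?ifN //; lia.
- by rewrite leqnSn ltnSn addr0.
Qed.

Lemma half_mul_leq_sum (f : nat -> nat) (a M : nat) :
  (forall t, a <= f t + f t.+1)%N -> (forall t, a./2 <= f t)%N ->
  (a * M %/ 2 <= \sum_(t < M) f t)%N.
Proof.
move=> pair_ge single_ge.
suff two_bounds : forall N, (a * N %/ 2 <= \sum_(t < N) f t)%N &&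
                             (a * N.+1 %/ 2 <= \sum_(t < N.+1) f t)%N.
  by case/andP: (two_bounds M).
elim=> [|N /andP [IH0 IH1]].
  by rewrite big_ord1 big_ord0 muln0 muln1 div0n divn2 single_ge.
rewrite IH1 !big_ord_recr /= -addnA (leq_trans _ (leq_add IH0 (pair_ge N))) //.
by rewrite !mulnS; lia.
Qed.

Section DYoke.

Variables n m : nat.
Implicit Types u v : {ffun 'I_m.+2 -> int}.

Lemma coord_eq_shift {j : nat} {a b : int} :
  coord_eq n m j a b -> exists2 c : int, a = b + c * n%:Z & (~~ is_end m j -> c = 0).
Proof.
rewrite /coord_eq; case: (is_end m j) => [|/eqP ->]; last by exists 0; rewrite ?mul0r ?addr0.
by rewrite eqz_mod_dvd => /dvdzP [c a_b]; exists c; rewrite // -a_b addrC subrK.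
Qed.

Lemma dyoke_adj_psum u v : dyoke_adj n m u v ->
  exists (i : 'I_m.+1) (c : int),
    forall t : 'I_m.+1, `|psum u t - psum v t - c * n%:Z| <= (t == i)%:R.
Proof.
case/and3P => _ _ /existsP [i /andP [/forallP same_off move_pair]].
have [e [e_unit shift_i shift_i1]] : exists e : int, [/\ `|e| = 1,
    coord_eq n m i (u (inord i)) (v (inord i) + e) &
    coord_eq n m i.+1 (u (inord i.+1)) (v (inord i.+1) - e)].
  by case/orP: move_pair => /andP [? ?]; [exists 1 | exists (-1); rewrite opprK].
have [c u_i c_mid] := coord_eq_shift shift_i.
have [c' u_i1 c'_mid] := coord_eq_shift shift_i1.
exists i, c => t.
rewrite /psum -sumrB (sum_supported2 (fun j => u (inord j) - v (inord j)) i) /=; last first.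
  move=> j j_le j_ne_i j_ne_i1; apply/eqP; rewrite subr_eq0.
  have /implyP := same_off (inord j); apply.
  by rewrite /= inordK ?j_ne_i ?j_ne_i1 //; have := ltn_ord t; lia.
(* c is nonzero only if i = 0, and c' only if i = m, where it does not reach P_0..P_m. *)
rewrite u_i u_i1; move: c_mid c'_mid; rewrite /is_end; have := ltn_ord t; have := ltn_ord i.
rewrite -val_eqE /=; case: (ltngtP i t) => [i_lt | i_gt | /val_inj ->]; lia.
Qed.

Definition psum_dist (k : int) v : int := \sum_(t < m.+1) `|k * n%:Z - psum v t|.

Lemma psum_dist_adj u v k : dyoke_adj n m u v ->
  exists k', psum_dist k' v <= psum_dist k u + 1.
Proof.
move=> /dyoke_adj_psum [i [c psum_near]]; exists (k - c).
have term_le (t : 'I_m.+1) :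
    `|(k - c) * n%:Z - psum v t| <= `|k * n%:Z - psum u t| + (t == i)%:R.
  by have := psum_near t; lia.
rewrite /psum_dist (le_trans (ler_sum _ (fun t _ => term_le t))) // big_split /= lerD2l.
by rewrite (bigD1 i) //= eqxx big1 ?addr0 // => t /negbTE ->.
Qed.

Lemma psum_dist_path x p k : path (dyoke_adj n m) x p ->
  exists k', psum_dist k' (last x p) <= psum_dist k x + (size p)%:Z.
Proof.
elim: p x k => [|y p IHp] x k /=; first by exists k; rewrite addr0.
case/andP => /(psum_dist_adj _ _ k) [k1 le_k1] /(IHp _ k1) [k2 le_k2].
by exists k2; lia.
Qed.

Lemma psum_dist0 : psum_dist 0 (dyoke_zero m) = 0.
Proof. by rewrite /psum_dist big1 // => t _; rewrite psum0 mul0r subrr normr0. Qed.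

Definition far_psum (t : nat) : int := if (t <= m)%N then ((n + odd t)./2)%:Z else n%:Z.

Definition far_vertex := of_psum m far_psum.

Lemma far_vertex_is_vertex : (1 < n)%N -> dyoke_vertex n m far_vertex.
Proof.
move=> n_gt1; apply/andP; split.
  apply/forallP => j; rewrite ffunE /far_psum /is_end.
  case: j => [[|j] j_lt] /=; first lia.
  by repeat case: ifP => ?; lia.
by rewrite (sum_psum m far_vertex) psum_of_psum // /far_psum ltnn dvdzz.
Qed.

Lemma far_psum_dist_ge k : (n * m.+1 %/ 2)%N%:Z <= psum_dist k far_vertex.
Proof.
pose f t := if k <= 0 then (n + odd t)./2 else (n - (n + odd t)./2)%N.
have term_ge (t : 'I_m.+1) : (f t)%:Z <= `|k * n%:Z - psum far_vertex t|.
  have t_le_m : (t <= m)%N by rewrite -ltnS.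
  rewrite psum_of_psum ?ltnS ?(leqW t_le_m) // /far_psum t_le_m /f.
  by case: ifP; nia.
apply: le_trans (ler_sum _ (fun t _ => term_ge t)).
rewrite -(big_morph _ PoszD (erefl 0%:Z)) lez_nat half_mul_leq_sum // => t.
all: by rewrite /f; case: ifP; lia.
Qed.

End DYoke.

Theorem lemma5p16 (n m : nat) :
  (1 < n)%N -> (1 <= m)%N ->
  ecc_ge _ (dyoke_vertex n m) (dyoke_adj n m) (dyoke_zero m) (n * m.+1 %/ 2).
Proof.
move=> n_gt1 _; exists (far_vertex n m); first exact: far_vertex_is_vertex.
move=> l [p [<- [walk_p end_p]]].
have [k] := psum_dist_path n m _ _ 0 walk_p; rewrite end_p => dist_le.
have := far_psum_dist_ge n m k; rewrite psum_dist0 add0r in dist_le; lia.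
Qed.
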